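(* Let $\Lambda=(0,\infty)$ and let $\chi\colon\Lambda\to\mathbb{R}^3_+$ be continuous, bounded, with $\operatorname{supp}\chi=[0,1]$ and $\chi(\lambda)\ne\mathbf{0}$ on $(0,1)$; let $\eta=\chi/\langle\mathbf{1},\chi\rangle$ on $(0,1)$, extended continuously to $[0,1]$. Let $\mathcal{P}$, $A$, $\mathcal{T}$ be as in the context. Let $\mu$ be a finite nonnegative Borel measure on $\Lambda$ with $\tilde\mu=\langle\chi(\cdot),\mathbf{1}\rangle\mu$ satisfying $\tilde\mu(\Lambda)=1$ and $\operatorname{supp}\tilde\mu=[0,1]$. Assume the spectral locus is strictly convex. Let $f,g$ be $\tilde\mu$-integrable functions with $\int f\,\mathrm{d}\tilde\mu=\int g\,\mathrm{d}\tilde\mu=1$ such that $f-g$ changes sign twice on $[0,1]$. Then $\mathbf{c}_\mu(f)\neq\mathbf{c}_\mu(g)$, where $\mathbf{c}_\mu(f)=\int_{[0,1]}f\eta\,\mathrm{d}\tilde\mu$.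
   Context: $\mathcal{P}=\{\int\chi\,\mathrm{d}\nu:\nu$ finite nonnegative Borel measure on $\Lambda\}$ is assumed to have nonempty interior; $A=\{\mathbf{x}\in\mathbb{R}^3:\langle\mathbf{x},\mathbf{1}\rangle=1\}$; $\mathcal{T}=\mathcal{P}\cap A$, regarded as a subset of $A$ with its relative topology. Fix a direction and orientation in $A$; $\angle(\mathbf{c}',\mathbf{c})$ is the angle from $\mathbf{c}$ to $\mathbf{c}'$. A cyclic interval in $[0,1]$: $[a,b]_{\mathbb{T}}=[a,b]$ if $a\le b$, $=[a,1]\cup[0,b]$ if $a>b$, and analogously for open/half-open ones. The spectral locus $\eta([0,1])$ is convex if $\eta([0,1])\subset\partial\mathcal{T}$ and for every $\mathbf{c}\in\operatorname{int}\mathcal{T}$ a continuous version of $\lambda\mapsto\angle(\eta(\lambda),\mathbf{c})$ is monotone on $[0,1]$ with $|\angle(\eta(0),\mathbf{c})-\angle(\eta(1),\mathbf{c})|\le2\pi$; it is strictly convex if moreover $\eta(\lambda)\notin[\eta(a),\eta(b)]$ for all pairwise distinct $a,b,\lambda\in[0,1]$ ($[\mathbf{x},\mathbf{y}]$ the closed segment). A $\tilde\mu$-measurable function $u$ on $[0,1]$ changes sign twice on $[0,1]$ if $\tilde\mu(\{u>0\})>0$, $\tilde\mu(\{u<0\})>0$, and there is a cyclic interval $I\subset[0,1]$ such that both $I$ and $[0,1]\setminus I$ have nonempty interior, $u\ge0$ on $I$ and $u\le0$ outside $I$. *)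

From HB Require Import structures.
From mathcomp Require Import all_boot all_order all_algebra.
From mathcomp Require Import all_classical all_reals all_analysis.
Set Implicit Arguments. Unset Strict Implicit. Unset Printing Implicit Defensive.
Import Order.TTheory GRing.Theory Num.Theory.
Import numFieldNormedType.Exports.
Local Open Scope classical_set_scope.
Local Open Scope ring_scope.

Section defs.
Variable R : realType.

Definition vec3 := 'I_3 -> R.

Definition Lam : set R := [set t | 0 < t].

Definition sum3 (x : vec3) : R := \sum_(i < 3) x i.

Definition inA (x : vec3) : Prop := sum3 x = 1.

(* P = { \int chi dnu : nu finite nonnegative Borel measure on Lambda } ;
   a measure on Lambda is represented as a finite measure on R with no mass
   outside Lambda *)
Definition inP (chi : R -> vec3) (x : vec3) : Prop :=
  exists nu : {finite_measure set R -> \bar R},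
    nu (~` Lam) = 0%E /\
    forall i : 'I_3, (x i)%:E = (\int[nu]_(t in Lam) (chi t i)%:E)%E.

Definition inT (chi : R -> vec3) (x : vec3) : Prop := inP chi x /\ inA x.

Definition near3 (x y : vec3) (e : R) : Prop := forall i, `|y i - x i| < e.

Definition relintA (S : vec3 -> Prop) (x : vec3) : Prop :=
  S x /\ exists2 e : R, 0 < e & forall y, inA y -> near3 x y e -> S y.
Definition clos3 (S : vec3 -> Prop) (x : vec3) : Prop :=
  forall e : R, 0 < e -> exists y, S y /\ near3 x y e.
Definition bdA (S : vec3 -> Prop) (x : vec3) : Prop :=
  clos3 S x /\ ~ relintA S x.

Definition has_interior3 (S : vec3 -> Prop) : Prop :=
  exists x, exists2 e : R, 0 < e & forall y, near3 x y e -> S y.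

(* fixed orthonormal coordinates (direction and orientation) on the direction
   plane {w | <w,1> = 0} of A *)
Definition crd1 (w : vec3) : R := (w 0 - w 1) / Num.sqrt 2.
Definition crd2 (w : vec3) : R := (w 0 + w 1 - 2 * w 2) / Num.sqrt 6.

(* theta is a version of lambda |-> angle(eta lambda, c) on [0,1], i.e. the
   oriented angle of the vector eta lambda - c *)
Definition angle_version (eta : R -> vec3) (c : vec3) (theta : R -> R) : Prop :=
  forall l : R, 0 <= l <= 1 ->
    exists2 r : R, 0 < r &
      crd1 (fun i => eta l i - c i) = r * cos (theta l) /\
      crd2 (fun i => eta l i - c i) = r * sin (theta l).

Definition monotone01 (theta : R -> R) : Prop :=
  (forall x y : R, 0 <= x -> x <= y -> y <= 1 -> theta x <= theta y) \/
  (forall x y : R, 0 <= x -> x <= y -> y <= 1 -> theta y <= theta x).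

Definition locus_convex (chi : R -> vec3) (eta : R -> vec3) : Prop :=
  (forall l : R, 0 <= l <= 1 -> bdA (inT chi) (eta l)) /\
  forall c, relintA (inT chi) c ->
    exists theta : R -> R,
      {within `[0, 1]%classic, continuous theta} /\
      angle_version eta c theta /\
      monotone01 theta /\
      `|theta 0 - theta 1| <= 2 * pi.

Definition in_segment (x y z : vec3) : Prop :=
  exists2 t : R, 0 <= t <= 1 & forall i, z i = (1 - t) * x i + t * y i.

Definition locus_strictly_convex (chi : R -> vec3) (eta : R -> vec3) : Prop :=
  locus_convex chi eta /\
  forall a b l : R, 0 <= a <= 1 -> 0 <= b <= 1 -> 0 <= l <= 1 ->
    a <> b -> a <> l -> b <> l -> ~ in_segment (eta a) (eta b) (eta l).

Definition msupp (m : set R -> \bar R) : set R :=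
  [set x | forall e : R, 0 < e -> (0 < m (ball x e))%E].

(* cyclic intervals in [0,1]; ca / cb say whether the left / right end is
   closed *)
Definition cyc_itv (a b : R) (ca cb : bool) : set R :=
  if a <= b then
    [set x | (if ca then a <= x else a < x) /\ (if cb then x <= b else x < b)]
  else
    [set x | 0 <= x <= 1 /\
             ((if ca then a <= x else a < x) \/ (if cb then x <= b else x < b))].

Definition cyclic_interval (I : set R) : Prop :=
  exists a b : R, exists ca cb : bool,
    0 <= a <= 1 /\ 0 <= b <= 1 /\ I = cyc_itv a b ca cb.

Definition changes_sign_twice (m : set R -> \bar R) (u : R -> R) : Prop :=
  (0 < m [set x | (0 < u x)%R])%E /\ (0 < m [set x | (u x < 0)%R])%E /\
  exists I : set R,
    cyclic_interval I /\ I `<=` `[0, 1] /\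
    (I°) !=set0 /\ ((`[0, 1] `\` I)°) !=set0 /\
    (forall x, I x -> 0 <= u x) /\
    (forall x, (`[0, 1] `\` I) x -> u x <= 0).

Definition cmu (mt : {measure set R -> \bar R}) (eta : R -> vec3) (f : R -> R)
  : 'I_3 -> \bar R :=
  fun i => (\int[mt]_(x in `[0%R, 1%R]) (f x * eta x i)%:E)%E.

End defs.

(* Write u := f - g.  The hypotheses make the moments of u against 1 and against
   the coordinates of eta vanish, so u is orthogonal to every affine function of
   eta(l).  On the plane A, l |-> det(eta a, eta l, eta b) is such a function;
   strict convexity forbids three distinct points of the locus on a line, so it
   vanishes only at l = a, b, and by the intermediate value theorem the
   orientation of every ordered triple of the locus is the same.  For the
   endpoints a < b of the cyclic interval where u changes sign, the product of u
   with this determinant therefore has a constant sign and zero integral, hence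
   vanishes a.e.: u is a.e. supported on {a, b}.  As u takes a negative value at
   one of them, q, the affine function <eta p - eta q, eta l - eta q> (p the
   other one) multiplied by u is again a.e. nonnegative with zero integral,
   which forces u <= 0 a.e., contradicting the positivity of u on a set of
   positive measure. *)

From HB Require Import structures.
From mathcomp Require Import all_boot all_order all_algebra.
From mathcomp Require Import all_classical all_reals all_analysis.
From mathcomp Require Import measurable_realfun ring lra.
Set Implicit Arguments. Unset Strict Implicit. Unset Printing Implicit Defensive.
Import Order.TTheory GRing.Theory Num.Theory.
Import numFieldNormedType.Exports.
Local Open Scope classical_set_scope.
Local Open Scope ring_scope.

Section orientation.
Variable R : realType.
Implicit Types x y z : vec3 R.

Lemma ord3P (i : 'I_3) : [\/ i = 0, i = 1 | i = 2%R].
Proof.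
by case: i => -[|[|[|//]]] Hi; [constructor 1 | constructor 2 | constructor 3];
  apply/val_inj.
Qed.

Lemma sum3E x : sum3 x = x 0 + x 1 + x 2%R.
Proof.
rewrite /sum3 !big_ord_recr big_ord0 /= add0r.
by congr (x _ + x _ + x _); apply/val_inj.
Qed.

(* Twice the signed area of the triangle x y z projected to the first two
   coordinates; for points of the plane A it is the determinant det(x, y, z). *)
Definition orient x y z : R :=
  (x 0 * y 1 - x 1 * y 0) + (y 0 * z 1 - y 1 * z 0) + (z 0 * x 1 - z 1 * x 0).

Lemma orient_rotate x y z : orient x y z = orient y z x.
Proof. rewrite /orient; ring. Qed.

Lemma orient_swap x y z : orient x y z = - orient x z y.
Proof. rewrite /orient; ring. Qed.

Lemma orient_xx x z : orient x x z = 0.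
Proof. rewrite /orient; ring. Qed.

Lemma orient_eq0_line x y z : inA x -> inA y -> inA z -> orient x y z = 0 ->
  y = x \/ exists s, forall i, z i = x i + s * (y i - x i).
Proof.
rewrite /inA !sum3E => sx sy sz o0.
have cross : (y 0 - x 0) * (z 1 - x 1) = (y 1 - x 1) * (z 0 - x 0).
  by apply/eqP; rewrite -subr_eq0 -o0 /orient; apply/eqP; ring.
have line s : z 0 - x 0 = s * (y 0 - x 0) -> z 1 - x 1 = s * (y 1 - x 1) ->
    exists s, forall i, z i = x i + s * (y i - x i).
  move=> e0 e1; exists s => i.
  have y2 : y 2%R - x 2%R = - (y 0 - x 0) - (y 1 - x 1) by lra.
  case: (ord3P i) => ->; [lra | lra | rewrite y2; lra].
have [u0|u0] := eqVneq (y 0 - x 0) 0.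
  have [u1|u1] := eqVneq (y 1 - x 1) 0.
    by left; apply/funext => i; case: (ord3P i) => ->; lra.
  right; apply: (line ((z 1 - x 1) / (y 1 - x 1))); last by rewrite divfK.
  move: cross; rewrite u0 mul0r => /esym /eqP; rewrite mulf_eq0 (negbTE u1).
  by move=> /eqP ->; rewrite mulr0.
right; apply: (line ((z 0 - x 0) / (y 0 - x 0))); first by rewrite divfK.
by apply: (mulfI u0); rewrite cross [RHS]mulrA [_ * (_ / _)]mulrC divfK // mulrC.
Qed.

Lemma line_segment x y z s : (forall i, z i = x i + s * (y i - x i)) ->
  [\/ in_segment x y z, in_segment x z y | in_segment y z x].
Proof.
move=> zE; have [s0|s_lt0] := lerP 0 s; last first.
  constructor 3; exists (1 - s)^-1.
    by rewrite invr_ge0 invf_le1; lra.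
  move=> i; rewrite zE; field; lra.
have [s1|s_gt1] := lerP s 1.
  by constructor 1; exists s; [lra | move=> i; rewrite zE; ring].
constructor 2; exists s^-1.
  by rewrite invr_ge0 invf_le1; lra.
move=> i; rewrite zE; field; lra.
Qed.

Lemma orient_eq0_segment x y z : inA x -> inA y -> inA z -> orient x y z = 0 ->
  [\/ in_segment x y z, in_segment x z y | in_segment y z x].
Proof.
move=> Ax Ay Az /(orient_eq0_line Ax Ay Az) [->|[s /line_segment]] //.
by constructor 2; exists 0; [rewrite lexx ler01 | move=> i; ring].
Qed.

End orientation.

Lemma continuous_neq0_sign (R : realType) (h : R -> R) (c d : R) : c <= d ->
  {within `[c, d], continuous h} -> (forall t, c <= t <= d -> h t != 0) ->
  0 < h c * h d.
Proof.
move=> cd hcont hnz; rewrite ltNge; apply/negP => hcd.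
have : Num.min (h c) (h d) <= 0 <= Num.max (h c) (h d).
  rewrite ge_min le_max.
  by case: (lerP (h c) 0) => hc0; case: (lerP (h d) 0) => hd0 //=; nra.
by move=> /(IVT cd hcont) [t]; rewrite in_itv => /hnz /eqP.
Qed.

Section locus.
Variables (R : realType) (eta : R -> vec3 R).
Implicit Types a b c d l t : R.
Hypothesis eta_cont : forall i, {within `[0, 1], continuous (fun t => eta t i)}.
Hypothesis eta_inA : forall t, 0 <= t <= 1 -> inA (eta t).
Hypothesis eta_no_segment : forall a b l : R,
  0 <= a <= 1 -> 0 <= b <= 1 -> 0 <= l <= 1 ->
  a <> b -> a <> l -> b <> l -> ~ in_segment (eta a) (eta b) (eta l).

Local Notation orient_at a b l := (orient (eta a) (eta b) (eta l)).

Lemma orient_at_neq0 a b l : 0 <= a <= 1 -> 0 <= b <= 1 -> 0 <= l <= 1 ->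
  a <> b -> a <> l -> b <> l -> orient_at a b l != 0.
Proof.
move=> a01 b01 l01 ab al bl; apply/eqP.
move=> /(orient_eq0_segment (eta_inA a01) (eta_inA b01) (eta_inA l01)) [].
- exact: eta_no_segment.
- by apply: eta_no_segment => // /esym.
- by apply: eta_no_segment => // /esym.
Qed.

Lemma orient_at_cont a b : {within `[0, 1], continuous (fun t => orient_at a b t)}.
Proof.
move=> t; rewrite /orient.
apply: cvgD; first apply: cvgD; first exact: cvg_cst.
  by apply: cvgB; apply: cvgMl_tmp; exact: eta_cont.
by apply: cvgB; apply: cvgMr_tmp; exact: eta_cont.
Qed.

Lemma orient_at_sign_const a b c d : 0 <= c -> c <= d -> d <= 1 ->
  0 <= a <= 1 -> 0 <= b <= 1 -> a <> b -> (a < c \/ d < a) -> (b < c \/ d < b) ->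
  0 < orient_at a b c * orient_at a b d.
Proof.
move=> c0 cd d1 a01 b01 ab acd bcd.
apply: (continuous_neq0_sign (h := fun t => orient_at a b t)) => //.
  apply: continuous_subspaceW (@orient_at_cont a b) => t.
  by rewrite /= !in_itv /= => /andP[ct td]; apply/andP; split; lra.
move=> t ctd; apply: orient_at_neq0 => //.
- by apply/andP; split; lra.
- by move: ctd => /andP[ct td] eq_at; rewrite eq_at in acd; lra.
- by move: ctd => /andP[ct td] eq_bt; rewrite eq_bt in bcd; lra.
Qed.

Local Notation orient_ref := (orient_at 0 2^-1 1).

Lemma orient_at_ordered (i j k : R) : 0 <= i -> i < j -> j < k -> k <= 1 ->
  0 < orient_at i j k * orient_ref.
Proof.
move=> i0 ij jk k1.
(* Move k to 1, then i to 0, then j to 1/2, keeping the three points distinct. *)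
have move_k : 0 < orient_at i j k * orient_at i j 1.
  by apply: orient_at_sign_const; try (apply/andP; split); lra.
have move_i : 0 < orient_at i j 1 * orient_at 0 j 1.
  rewrite [orient_at i j 1]orient_rotate [orient_at 0 j 1]orient_rotate mulrC.
  by apply: orient_at_sign_const; try (apply/andP; split); lra.
have move_j : 0 < orient_at 0 j 1 * orient_ref.
  rewrite -[orient_at 0 j 1]orient_rotate -[orient_ref]orient_rotate.
  have [j_le|j_gt] := lerP j 2^-1.
    by apply: (@orient_at_sign_const 1 0 j 2^-1); try (apply/andP; split); lra.
  rewrite mulrC.
  by apply: (@orient_at_sign_const 1 0 2^-1 j); try (apply/andP; split); lra.
nra.
Qed.

Definition separator a b t := orient_at a t b * orient_ref.

Lemma separator_sign a b t : 0 <= a -> a < b -> b <= 1 -> 0 <= t <= 1 ->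
  (a < t < b -> 0 < separator a b t) /\ (t < a \/ b < t -> separator a b t < 0).
Proof.
move=> a0 ab b1 /andP[t0 t1]; split.
  by move=> /andP[lt_at lt_tb]; exact: orient_at_ordered.
rewrite /separator orient_swap mulNr oppr_lt0 => -[ta|bt]; last exact: orient_at_ordered.
by rewrite -orient_rotate orient_at_ordered.
Qed.

Lemma separator_eq0 a b t : 0 <= a -> a < b -> b <= 1 -> 0 <= t <= 1 ->
  separator a b t = 0 -> t = a \/ t = b.
Proof.
move=> a0 ab b1 t01 s0; have [s_in s_out] := separator_sign a0 ab b1 t01.
have [ta|lt_at|->] := ltrgtP t a; last by left.
  by have := s_out (or_introl ta); rewrite s0 ltxx.
have [tb|bt|->] := ltrgtP t b; last by right.
  by move: s_in; rewrite lt_at tb s0 ltxx => /(_ isT).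
by have := s_out (or_intror bt); rewrite s0 ltxx.
Qed.

Lemma separator_mul_ge0 a b (h : R -> R) : 0 <= a -> a < b -> b <= 1 ->
  (forall x, 0 <= x <= 1 ->
    (a < x < b -> 0 <= h x) /\ (x < a \/ b < x -> h x <= 0)) ->
  forall x, 0 <= x <= 1 -> 0 <= h x * separator a b x.
Proof.
move=> a0 ab b1 h_sign x x01; have [h_in h_out] := h_sign x x01.
have [s_in s_out] := separator_sign a0 ab b1 x01.
have [xa|lt_ax|->] := ltrgtP x a.
- by apply: mulr_le0; [apply: h_out | apply/ltW/s_out]; left.
- have [xb|bx|->] := ltrgtP x b.
  + by apply: mulr_ge0; [apply: h_in | apply/ltW/s_in]; rewrite lt_ax.
  + by apply: mulr_le0; [apply: h_out | apply/ltW/s_out]; right.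
  + by rewrite /separator orient_rotate orient_xx mul0r mulr0.
- by rewrite /separator orient_xx mul0r mulr0.
Qed.

Lemma eta_inj a b : 0 <= a <= 1 -> 0 <= b <= 1 -> a <> b -> eta a <> eta b.
Proof.
move=> a01 b01 ab eq_ab; have mid01 : 0 <= (a + b) / 2 <= 1.
  by move: a01 b01 => /andP[? ?] /andP[? ?]; apply/andP; split; lra.
have [a_mid b_mid] : a <> (a + b) / 2 /\ b <> (a + b) / 2.
  by split=> ?; apply: ab; lra.
have /eqP[] := orient_at_neq0 a01 b01 mid01 ab a_mid b_mid.
by rewrite eq_ab orient_xx.
Qed.

End locus.

Section moments.
Context d (T : measurableType d) (R : realType).
Variables (mu : {measure set T -> \bar R}) (D : set T).
Hypothesis mD : measurable D.

Definition null_int (F : T -> R) :=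
  mu.-integrable D (EFin \o F) /\ (\int[mu]_(x in D) (F x)%:E = 0)%E.

Lemma null_intD F G : null_int F -> null_int G -> null_int (fun x => F x + G x).
Proof.
move=> [iF F0] [iG G0]; split.
  by under [EFin \o _]funext do rewrite /= EFinD; exact: integrableD.
by under eq_integral do rewrite EFinD; rewrite integralD_EFin // F0 G0 adde0.
Qed.

Lemma null_intZ k F : null_int F -> null_int (fun x => k * F x).
Proof.
move=> [iF F0]; split.
  by under [EFin \o _]funext do rewrite /= EFinM; exact: integrableZl.
by under eq_integral do rewrite EFinM; rewrite integralZl // F0 mule0.
Qed.

Lemma null_intB F G :
  mu.-integrable D (EFin \o F) -> mu.-integrable D (EFin \o G) ->
  (\int[mu]_(x in D) (F x)%:E = \int[mu]_(x in D) (G x)%:E)%E ->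
  null_int (fun x => F x - G x).
Proof.
move=> iF iG FG; split.
  by under [EFin \o _]funext do rewrite /= EFinB; exact: integrableB.
under eq_integral do rewrite EFinB.
by rewrite integralB_EFin // FG subee // -FG integrable_fin_num.
Qed.

Lemma null_int_ge0_ae F : null_int F -> {ae mu, forall x, D x -> 0 <= F x} ->
  {ae mu, forall x, D x -> F x = 0}.
Proof.
move=> [iF F0] F_ge0; have mF := measurable_int _ iF.
have : (\int[mu]_(x in D) `|(EFin \o F) x| = 0)%E.
  rewrite -F0; apply: ae_eq_integral => //.
    exact: measurableT_comp.
  by apply: filterS F_ge0 => x F_ge0 Dx; rewrite gee0_abs // lee_fin F_ge0.
move=> /(ae_eq_integral_abs _ mD mF).
by apply: filterS => x F_0 Dx; have [] := F_0 Dx.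
Qed.

Lemma ae_witness (S : set T) (P : T -> Prop) : measurable S -> (0 < mu S)%E ->
  {ae mu, forall x, P x} -> exists x, S x /\ P x.
Proof.
move=> mS S_gt0 [N [mN N0 notPN]]; apply: contrapT => noS.
suff S0 : mu S = 0%E by move: S_gt0; rewrite S0 ltxx.
apply: (subset_measure0 mS mN _ N0) => x Sx.
by apply: notPN => Px; apply: noS; exists x.
Qed.

Variable eta : T -> vec3 R.

Definition affine_in (L : T -> R) := exists c0 c1 c2 c : R,
  forall x, L x = c0 * eta x 0 + c1 * eta x 1 + c2 * eta x 2%R + c.

Definition eta_moments0 (u : T -> R) :=
  null_int u /\ forall i, null_int (fun x => u x * eta x i).

Lemma eta_moments0_affine u L : eta_moments0 u -> affine_in L ->
  null_int (fun x => u x * L x).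
Proof.
move=> [u0 ue0] [c0 [c1 [c2 [c Lx]]]].
have -> : (fun x => u x * L x) = fun x => c0 * (u x * eta x 0) +
    c1 * (u x * eta x 1) + c2 * (u x * eta x 2%R) + c * u x.
  by apply/funext => x; rewrite Lx; ring.
by repeat apply: null_intD; apply: null_intZ.
Qed.

Lemma eta_moments0_support u L a b : eta_moments0 u -> affine_in L ->
  (forall x, D x -> 0 <= u x * L x) ->
  (forall x, D x -> L x = 0 -> x = a \/ x = b) ->
  {ae mu, forall x, D x -> u x != 0 -> x = a \/ x = b}.
Proof.
move=> m0 aL uL_ge0 L0.
have := null_int_ge0_ae (eta_moments0_affine m0 aL) (aeW _ uL_ge0).
apply: filterS => x uL0 Dx ux; apply: L0 => //.
by apply/eqP; move/eqP: (uL0 Dx); rewrite mulf_eq0 (negbTE ux).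
Qed.

Lemma eta_moments0_two_points u p q : eta_moments0 u -> eta p <> eta q ->
  u q <= 0 -> {ae mu, forall x, D x -> u x != 0 -> x = p \/ x = q} ->
  {ae mu, forall x, D x -> u x <= 0}.
Proof.
move=> m0 pq uq supp; have [up|up] := lerP (u p) 0.
  apply: filterS supp => x sx Dx.
  by have [->|/(sx Dx)[]->] := eqVneq (u x) 0.
pose dlt i := eta p i - eta q i.
pose L x := dlt 0 * (eta x 0 - eta q 0) + dlt 1 * (eta x 1 - eta q 1) +
  dlt 2%R * (eta x 2%R - eta q 2%R).
have aL : affine_in L.
  exists (dlt 0), (dlt 1), (dlt 2%R),
    (- (dlt 0 * eta q 0 + dlt 1 * eta q 1 + dlt 2%R * eta q 2%R)).
  by move=> x; rewrite /L; ring.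
have Lq : L q = 0 by rewrite /L !subrr !mulr0 !addr0.
have Lp : 0 < L p.
  rewrite ltNge; apply/negP => Lp0; apply: pq; apply/funext => i.
  apply/eqP; rewrite -subr_eq0 -sqrf_eq0 eq_le sqr_ge0 andbT.
  move: Lp0 (sqr_ge0 (dlt 0)) (sqr_ge0 (dlt 1)) (sqr_ge0 (dlt 2%R)).
  by rewrite /L /dlt; case: (ord3P i) => ->; lra.
have uL_ge0 : {ae mu, forall x, D x -> 0 <= u x * L x}.
  apply: filterS supp => x sx Dx.
  have [->|/(sx Dx)[]->] := eqVneq (u x) 0; first by rewrite mul0r.
    by rewrite mulr_ge0 // ltW.
  by rewrite Lq mulr0.
apply: filterS2 supp (null_int_ge0_ae (eta_moments0_affine m0 aL) uL_ge0).
move=> x sx uL0 Dx; have [->|/(sx Dx)[]ex] := eqVneq (u x) 0 => //.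
  by have := uL0 Dx; rewrite ex => /eqP; rewrite mulf_eq0 !gt_eqF.
by rewrite ex.
Qed.

Lemma eta_moments0_two_signs u a b : measurable_fun setT u ->
  {ae mu, forall x, D x} -> eta_moments0 u -> eta a <> eta b ->
  {ae mu, forall x, D x -> u x != 0 -> x = a \/ x = b} ->
  (0 < mu [set x | (0 < u x)%R])%E -> (0 < mu [set x | (u x < 0)%R])%E -> False.
Proof.
move=> mu_meas aeD m0 ab supp pos neg.
have m_pos : measurable [set x | 0 < u x].
  rewrite -preimage_itvoy -[_ @^-1` _]setTI.
  by apply: mu_meas => //; exact: measurable_itv.
have m_neg : measurable [set x | u x < 0].
  rewrite -preimage_itvNyo -[_ @^-1` _]setTI.
  by apply: mu_meas => //; exact: measurable_itv.
have [q [uq [Dq sq]]] := ae_witness m_neg neg (filterI aeD supp).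
have [p pq supp'] : exists2 p, eta p <> eta q &
    {ae mu, forall x, D x -> u x != 0 -> x = p \/ x = q}.
  case: (sq Dq (ltr0_neq0 uq)) => ->; [exists b | by exists a].
    by move=> /esym.
  by apply: filterS supp => x sx Dx /(sx Dx) [] ->; [right | left].
have u_le0 := eta_moments0_two_points m0 pq (ltW uq) supp'.
have [x [ux [Dx ux_le0]]] := ae_witness m_pos pos (filterI aeD u_le0).
by move: (ux_le0 Dx); rewrite leNgt ux.
Qed.

End moments.

Lemma affine_in_separator (R : realType) (eta : R -> vec3 R) (a b e : R) :
  affine_in eta (fun t => e * separator eta a b t).
Proof.
pose k := e * orient (eta 0) (eta 2^-1) (eta 1).
exists (k * (eta b 1 - eta a 1)), (k * (eta a 0 - eta b 0)), 0.
exists (k * (eta b 0 * eta a 1 - eta b 1 * eta a 0)).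
by move=> t; rewrite /k /separator /orient; ring.
Qed.

Section spectral_data.
Variable R : realType.
Implicit Types (chi eta : R -> vec3 R) (mut : {measure set R -> \bar R}).

Lemma within_continuous_itv_cst (h : R -> R) (a b c : R) : a < b ->
  {within `[a, b], continuous h} -> (forall t, a < t < b -> h t = c) ->
  forall t, a <= t <= b -> h t = c.
Proof.
move=> ab hcont hc t /andP[a_le_t t_le_b].
have [_ ha hb] := (continuous_within_itvP _ ab).1 hcont.
have [<-|a_neq_t] := eqVneq a t.
  apply: (cvg_unique (@Rhausdorff R) ha); apply: cvg_near_cst; near=> s; apply: hc.
  by apply/andP; split; near: s; [exact: nbhs_right_gt | exact: nbhs_right_lt].
have [->|t_neq_b] := eqVneq t b.
  apply: (cvg_unique (@Rhausdorff R) hb); apply: cvg_near_cst; near=> s; apply: hc.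
  by apply/andP; split; near: s; [exact: nbhs_left_gt | exact: nbhs_left_lt].
by apply: hc; rewrite !lt_neqAle a_neq_t t_neq_b a_le_t t_le_b.
Unshelve. all: by end_near. Qed.

Lemma normalized_inA chi eta : (forall t, 0 < t -> forall i, 0 <= chi t i) ->
  (forall t, 0 < t < 1 -> exists i, chi t i != 0) ->
  (forall t, 0 < t < 1 -> forall i, eta t i = chi t i / sum3 (chi t)) ->
  (forall i, {within `[0, 1], continuous (fun t => eta t i)}) ->
  forall t, 0 <= t <= 1 -> inA (eta t).
Proof.
move=> chi_ge0 chi_neq0 eta_chi eta_cont.
apply: (within_continuous_itv_cst (h := fun t => sum3 (eta t)) ltr01).
  have -> : (fun t => sum3 (eta t)) = fun t => eta t 0 + eta t 1 + eta t 2%R.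
    by apply/funext => t; rewrite sum3E.
  by move=> t; apply: cvgD; [apply: cvgD|]; exact: eta_cont.
move=> t t01; have /andP[t_gt0 _] := t01.
have sum_neq0 : sum3 (chi t) != 0.
  rewrite /sum3 psumr_eq0 => [|i _]; last exact: chi_ge0.
  by have [i chi_i] := chi_neq0 t t01; apply/allPn; exists i.
by rewrite /sum3 (eq_bigr _ (fun i _ => eta_chi t t01 i)) -mulr_suml divff.
Qed.

Lemma measure_compl01_eq0 chi (mu mut : {measure set R -> \bar R}) :
  closure [set t | 0 < t /\ exists i, chi t i != 0] = `[0, 1]%classic ->
  (forall A, measurable A ->
     mut A = (\int[mu]_(t in A `&` @Lam R) (sum3 (chi t))%:E)%E) ->
  mut (~` `[0, 1]%classic) = 0%E.
Proof.
move=> supp_chi mutE.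
rewrite mutE; last by apply: measurableC; exact: measurable_itv.
apply: integral0_eq => t [/= t01 t_gt0]; rewrite /sum3 big1 // => i _.
apply: contrapT => /eqP chi_i; apply: t01.
have : closure [set t | 0 < t /\ exists i, chi t i != 0] t.
  by apply: subset_closure; split => //; exists i.
by rewrite supp_chi.
Qed.

Lemma within_continuous_bounded (h : R -> R) (a b : R) :
  {within `[a, b], continuous h} -> [bounded h x | x in `[a, b]%classic].
Proof.
move=> hcont.
have /= := compact_bounded (continuous_compact hcont (@segment_compact R a b)).
by move=> [M [M_real hM]]; exists M; split => // N MN x abx; apply: (hM N MN); exists x.
Qed.

Lemma integrableM_within_continuous mut (F h : R -> R) (a b : R) :
  mut.-integrable `[a, b] (EFin \o F) -> {within `[a, b], continuous h} ->
  mut.-integrable `[a, b] (EFin \o (fun x => F x * h x)).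
Proof.
move=> iF hcont; have mab : measurable (`[a, b]%classic : set R) := measurable_itv _.
have := integrableMl mab iF (subspace_continuous_measurable_fun mab hcont)
  (within_continuous_bounded hcont).
by congr (_.-integrable _ _); apply/funext => x /=; rewrite EFinM.
Qed.

Lemma cmu_eq_moments0 mut eta (f g : R -> R) :
  mut (~` `[0, 1]%classic) = 0%E ->
  (forall i, {within `[0, 1], continuous (fun t => eta t i)}) ->
  mut.-integrable setT (EFin \o f) -> mut.-integrable setT (EFin \o g) ->
  (\int[mut]_x (f x)%:E = \int[mut]_x (g x)%:E)%E ->
  cmu mut eta f = cmu mut eta g -> eta_moments0 mut `[0, 1] eta (f \- g).
Proof.
move=> null_out eta_cont iF iG fg cmu_fg.
have m01 : measurable (`[0, 1]%classic : set R) := measurable_itv _.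
have int01 F : mut.-integrable setT (EFin \o F) ->
    (\int[mut]_(x in `[0%R, 1%R]) (F x)%:E = \int[mut]_x (F x)%:E)%E.
  move=> iF'; have := negligible_integral (measurableC m01) measurableT iF' null_out.
  by rewrite setTD setCK => ->.
have [iF01 iG01] := (integrableS measurableT m01 (subsetT _) iF,
                     integrableS measurableT m01 (subsetT _) iG).
split; first by apply: (null_intB m01); rewrite ?int01.
move=> i; have -> : (fun x => (f \- g) x * eta x i) =
    fun x => f x * eta x i - g x * eta x i by apply/funext => x; rewrite /= mulrBl.
apply: (null_intB m01).
- exact: integrableM_within_continuous iF01 (eta_cont i).
- exact: integrableM_within_continuous iG01 (eta_cont i).
- by have := congr1 (fun c => c i) cmu_fg.
Qed.

Lemma cyclic_interval_sign (h : R -> R) (I : set R) : cyclic_interval I ->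
  I° !=set0 -> (forall x, I x -> 0 <= h x) ->
  (forall x, (`[0, 1] `\` I) x -> h x <= 0) ->
  exists a b e : R, [/\ 0 <= a, a < b, b <= 1, e != 0 &
    forall x, 0 <= x <= 1 ->
      (a < x < b -> 0 <= e * h x) /\ (x < a \/ b < x -> e * h x <= 0)].
Proof.
move=> [a [b [ca [cb [/andP[a0 a1] [/andP[b0 b1] ->]]]]]] I0 hI hO.
move: I0 hI hO; rewrite /cyc_itv; case: ifPn; last rewrite -ltNge;
  move=> ab I0 hI hO.
  have sub : [set x | a < x ?<= if ca /\ x < b ?<= if cb] `<=` `[a, b].
    by move=> x [ax xb]; rewrite /= in_itv /= (lteifW ax) (lteifW xb).
  have lt_ab : a < b.
    case: I0 => x /(interiorS sub); rewrite interior_itv_bnd /= in_itv /=.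
    by move=> /andP[]; exact: lt_trans.
  exists a, b, 1; split => // x /andP[x0 x1]; rewrite mul1r; split.
    by move=> /andP[ax xb]; apply: hI; split; exact: lteifS.
  move=> x_out; apply: hO; split; first by rewrite /= in_itv /= x0 x1.
  by move=> /sub; rewrite /= in_itv /= => /andP[]; case: x_out; lra.
(* A cyclic interval wrapping around 1 is the complement of ]b, a[, whence e = -1. *)
exists b, a, (-1); split; rewrite ?oppr_eq0 ?oner_eq0 //.
move=> x /andP[x0 x1]; rewrite mulN1r oppr_ge0 oppr_le0; split.
  move=> /andP[bx xa]; apply: hO; split; first by rewrite /= in_itv /= x0 x1.
  by move=> [_ [/lteifW|/lteifW]]; lra.
move=> x_out; apply: hI; split; first by rewrite x0 x1.
by case: x_out => [xb|ax]; [right | left]; exact: lteifS.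
Qed.

End spectral_data.

Theorem lemma4 (R : realType) (chi : R -> vec3 R) (eta : R -> vec3 R)
  (mu : {finite_measure set R -> \bar R})
  (mut : {measure set R -> \bar R}) (f g : R -> R) :
  (* chi : Lambda -> R^3_+ continuous, bounded *)
  (forall t, 0 < t -> forall i, 0 <= chi t i) ->
  (forall i, {within @Lam R, continuous (fun t => chi t i)}) ->
  (exists M : R, forall t, 0 < t -> forall i, chi t i <= M) ->
  (* supp chi = [0,1], chi <> 0 on (0,1) *)
  closure [set t | 0 < t /\ exists i, chi t i != 0] = `[0, 1]%classic ->
  (forall t, 0 < t < 1 -> exists i, chi t i != 0) ->
  (* eta = chi / <1,chi> on (0,1), continuously extended to [0,1] *)
  (forall t, 0 < t < 1 -> forall i, eta t i = chi t i / sum3 (chi t)) ->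
  (forall i, {within `[0, 1]%classic, continuous (fun t => eta t i)}) ->
  (* P has nonempty interior *)
  has_interior3 (inP chi) ->
  (* mu is a finite measure on Lambda, tilde mu = <chi,1> mu *)
  mu (~` @Lam R) = 0%E ->
  (forall A, measurable A ->
     mut A = (\int[mu]_(t in A `&` @Lam R) (sum3 (chi t))%:E)%E) ->
  mut (@Lam R) = 1%E ->
  msupp mut = `[0, 1]%classic ->
  (* strict convexity of the spectral locus *)
  locus_strictly_convex chi eta ->
  mut.-integrable setT (EFin \o f) ->
  mut.-integrable setT (EFin \o g) ->
  (\int[mut]_x (f x)%:E)%E = 1%E ->
  (\int[mut]_x (g x)%:E)%E = 1%E ->
  changes_sign_twice mut (f \- g) ->
  cmu mut eta f <> cmu mut eta g.
Proof.
move=> chi_ge0 _ _ supp_chi chi_neq0 eta_chi eta_cont _ _ mutE _ _ [_ no_segment]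
  iF iG F1 G1 [pos [neg [I [cycI [_ [I0 [_ [hI hO]]]]]]]] eq_cmu.
have inA01 := normalized_inA chi_ge0 chi_neq0 eta_chi eta_cont.
have null_out := measure_compl01_eq0 supp_chi mutE.
have m01 : measurable (`[0, 1]%classic : set R) := measurable_itv _.
have ae01 : {ae mut, forall x, `[0, 1]%classic x}.
  by exists (~` `[0, 1]%classic); split => //; apply: measurableC.
have m0 := cmu_eq_moments0 null_out eta_cont iF iG (etrans F1 (esym G1)) eq_cmu.
have [a [b [e [a0 ab b1 e0 sgn]]]] := cyclic_interval_sign cycI I0 hI hO.
have [a01 b01] : 0 <= a <= 1 /\ 0 <= b <= 1 by split; apply/andP; split; lra.
have mfg : measurable_fun setT (f \- g).
  by apply: measurable_funB; apply/measurable_EFinP;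
    [exact: measurable_int iF | exact: measurable_int iG].
have a_neq_b : a <> b by move=> eq_ab; rewrite eq_ab ltxx in ab.
apply: (eta_moments0_two_signs m01 mfg ae01 m0
  (eta_inj inA01 no_segment a01 b01 a_neq_b) _ pos neg).
apply: (eta_moments0_support m01 m0 (affine_in_separator eta a b e)) => x.
all: rewrite /= in_itv /= => x01.
  rewrite mulrA [_ * e]mulrC.
  exact: (separator_mul_ge0 eta_cont inA01 no_segment a0 ab b1 sgn).
move=> /eqP; rewrite mulf_eq0 (negbTE e0) /= => /eqP.
exact: (separator_eq0 eta_cont inA01 no_segment a0 ab b1).
Qed.
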